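(* Let $k_1,\dots,k_{10}$ be smooth functions of $(t,r)$ (the coefficients of a spherically symmetric torsion-free connection with $k_{11}=k_{12}=0$, as in the context), and assume $k_{10}\neq0$. Then the following statements are equivalent: 1. $A=B=C=D=E=F=0$; 2. $[\delta_t,\delta_r]=\alpha\,\delta_w$ for some function $\alpha$ (possibly depending on $(t,r,\dot t,\dot r,w)$), where either $\alpha=0$ or $b=c=0$.
   Context: Coordinates $(t,r,\theta,\phi)$ on a 4-dimensional chart domain, induced velocity coordinates, $w^2=\dot\theta^2+\sin^2\theta\,\dot\phi^2$. The connection has nonzero coefficients $\Gamma^t_{tt}=k_1$, $\Gamma^t_{tr}=k_2$, $\Gamma^t_{rr}=k_3$, $\Gamma^r_{tt}=k_4$, $\Gamma^r_{rr}=k_5$, $\Gamma^r_{tr}=k_6$, $\Gamma^t_{\theta\theta}=k_7$, $\Gamma^t_{\phi\phi}=k_7\sin^2\theta$, $\Gamma^\theta_{\theta t}=\Gamma^\phi_{\phi t}=k_8$, $\Gamma^\theta_{\theta r}=\Gamma^\phi_{\phi r}=k_9$, $\Gamma^r_{\theta\theta}=k_{10}$, $\Gamma^r_{\phi\phi}=k_{10}\sin^2\theta$, $\Gamma^\phi_{\theta\phi}=\cot\theta$, $\Gamma^\theta_{\phi\phi}=-\sin\theta\cos\theta$ (symmetric in lower indices). Vector fields in the variables $(t,r,\dot t,\dot r,w)$: $\delta_t=\partial_t-(k_1\dot t+k_2\dot r)\dot\partial_t-(k_4\dot t+k_6\dot r)\dot\partial_r-k_8w\partial_w$, $\delta_r=\partial_r-(k_2\dot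 t+k_3\dot r)\dot\partial_t-(k_6\dot t+k_5\dot r)\dot\partial_r-k_9w\partial_w$, $\delta_w=wk_7\dot\partial_t+wk_{10}\dot\partial_r+(k_8\dot t+k_9\dot r)\partial_w$. Coefficients (subscripts ${}_{,t},{}_{,r}$ denote partial derivatives): $a_1=k_{1,r}-k_{2,t}+k_3k_4-k_2k_6$, $a_2=k_{2,r}-k_{3,t}+k_2^2+k_3k_6-k_1k_3-k_2k_5$, $a_3=k_{4,r}-k_{6,t}+k_1k_6+k_4k_5-k_2k_4-k_6^2$, $a_4=k_{6,r}-k_{5,t}+k_2k_6-k_3k_4$, $a_5=k_{8,r}-k_{9,t}$. Set $a=k_7/k_{10}$, $b=k_8/k_{10}$, $c=(k_9k_{10}-k_7k_8)/k_{10}^2$ and $A=b(aa_1+a_2)+(ab+c)(aa_3+a_4)-a_5(2ab+c)$, $B=a(aa_3+a_4)-(aa_1+a_2)$, $C=(ab+c)a_3+b(aa_3+a_4)+b(a_1-2a_5)$, $D=aa_3-a_1+a_5$, $E=ba_3$, $F=aa_3-a_1$. *)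

From Stdlib Require Import Reals.
From Coquelicot Require Import Coquelicot.
Open Scope R_scope.

Definition d_t (f : R -> R -> R) (t r : R) : R := Derive (fun s => f s r) t.
Definition d_r (f : R -> R -> R) (t r : R) : R := Derive (fun s => f t s) r.

Fixpoint Ck_on (n : nat) (U : R * R -> Prop) (f : R -> R -> R) : Prop :=
  match n with
  | O => forall t r, U (t, r) ->
           continuous (fun p : R * R => f (fst p) (snd p)) (t, r)
  | S m => (forall t r, U (t, r) ->
              continuous (fun p : R * R => f (fst p) (snd p)) (t, r)
              /\ ex_derive (fun s => f s r) t /\ ex_derive (fun s => f t s) r)
           /\ Ck_on m U (d_t f) /\ Ck_on m U (d_r f)
  end.

Definition smooth_on (U : R * R -> Prop) (f : R -> R -> R) : Prop :=
  forall n, Ck_on n U f.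

Record coeffs := mkCoeffs {
  k1 : R -> R -> R; k2 : R -> R -> R; k3 : R -> R -> R; k4 : R -> R -> R;
  k5 : R -> R -> R; k6 : R -> R -> R; k7 : R -> R -> R; k8 : R -> R -> R;
  k9 : R -> R -> R; k10 : R -> R -> R }.

Definition coeffs_smooth (U : R * R -> Prop) (K : coeffs) : Prop :=
  smooth_on U (k1 K) /\ smooth_on U (k2 K) /\ smooth_on U (k3 K) /\
  smooth_on U (k4 K) /\ smooth_on U (k5 K) /\ smooth_on U (k6 K) /\
  smooth_on U (k7 K) /\ smooth_on U (k8 K) /\ smooth_on U (k9 K) /\
  smooth_on U (k10 K).

Section Coefs.
Variable K : coeffs.
Variables t r : R.
Let K1 := k1 K t r. Let K2 := k2 K t r. Let K3 := k3 K t r. Let K4 := k4 K t r.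
Let K5 := k5 K t r. Let K6 := k6 K t r. Let K7 := k7 K t r. Let K8 := k8 K t r.
Let K9 := k9 K t r. Let K10 := k10 K t r.

Definition a1 := d_r (k1 K) t r - d_t (k2 K) t r + K3 * K4 - K2 * K6.
Definition a2 := d_r (k2 K) t r - d_t (k3 K) t r + K2 ^ 2 + K3 * K6 - K1 * K3 - K2 * K5.
Definition a3 := d_r (k4 K) t r - d_t (k6 K) t r + K1 * K6 + K4 * K5 - K2 * K4 - K6 ^ 2.
Definition a4 := d_r (k6 K) t r - d_t (k5 K) t r + K2 * K6 - K3 * K4.
Definition a5 := d_r (k8 K) t r - d_t (k9 K) t r.

Definition ca := K7 / K10.
Definition cb := K8 / K10.
Definition cc := (K9 * K10 - K7 * K8) / K10 ^ 2.

Definition cA := cb * (ca * a1 + a2) + (ca * cb + cc) * (ca * a3 + a4)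
                 - a5 * (2 * ca * cb + cc).
Definition cB := ca * (ca * a3 + a4) - (ca * a1 + a2).
Definition cC := (ca * cb + cc) * a3 + cb * (ca * a3 + a4) + cb * (a1 - 2 * a5).
Definition cD := ca * a3 - a1 + a5.
Definition cE := cb * a3.
Definition cF := ca * a3 - a1.
End Coefs.

(* scalar fields: functions of (t, r, tdot, rdot, w) *)
Definition SF := R -> R -> R -> R -> R -> R.

Record VF := mkVF { vt : SF; vr : SF; vtd : SF; vrd : SF; vw : SF }.

Definition pd_t (f : SF) : SF := fun t r x y w => Derive (fun s => f s r x y w) t.
Definition pd_r (f : SF) : SF := fun t r x y w => Derive (fun s => f t s x y w) r.
Definition pd_td (f : SF) : SF := fun t r x y w => Derive (fun s => f t r s y w) x.
Definition pd_rd (f : SF) : SF := fun t r x y w => Derive (fun s => f t r x s w) y.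
Definition pd_w (f : SF) : SF := fun t r x y w => Derive (fun s => f t r x y s) w.

Definition vf_apply (X : VF) (f : SF) : SF := fun t r x y w =>
  vt X t r x y w * pd_t f t r x y w + vr X t r x y w * pd_r f t r x y w
  + vtd X t r x y w * pd_td f t r x y w + vrd X t r x y w * pd_rd f t r x y w
  + vw X t r x y w * pd_w f t r x y w.

Definition bracket (X Y : VF) : VF :=
  mkVF (fun t r x y w => vf_apply X (vt Y) t r x y w - vf_apply Y (vt X) t r x y w)
       (fun t r x y w => vf_apply X (vr Y) t r x y w - vf_apply Y (vr X) t r x y w)
       (fun t r x y w => vf_apply X (vtd Y) t r x y w - vf_apply Y (vtd X) t r x y w)
       (fun t r x y w => vf_apply X (vrd Y) t r x y w - vf_apply Y (vrd X) t r x y w)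
       (fun t r x y w => vf_apply X (vw Y) t r x y w - vf_apply Y (vw X) t r x y w).

Definition scale (al : SF) (X : VF) : VF :=
  mkVF (fun t r x y w => al t r x y w * vt X t r x y w)
       (fun t r x y w => al t r x y w * vr X t r x y w)
       (fun t r x y w => al t r x y w * vtd X t r x y w)
       (fun t r x y w => al t r x y w * vrd X t r x y w)
       (fun t r x y w => al t r x y w * vw X t r x y w).

Definition VF_eq_on (D : R -> R -> R -> R -> R -> Prop) (X Y : VF) : Prop :=
  forall t r x y w, D t r x y w ->
    vt X t r x y w = vt Y t r x y w /\ vr X t r x y w = vr Y t r x y w /\
    vtd X t r x y w = vtd Y t r x y w /\ vrd X t r x y w = vrd Y t r x y w /\
    vw X t r x y w = vw Y t r x y w.

(* x = tdot, y = rdot *)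
Definition delta_t (K : coeffs) : VF :=
  mkVF (fun _ _ _ _ _ => 1) (fun _ _ _ _ _ => 0)
       (fun t r x y w => - (k1 K t r * x + k2 K t r * y))
       (fun t r x y w => - (k4 K t r * x + k6 K t r * y))
       (fun t r x y w => - (k8 K t r * w)).

Definition delta_r (K : coeffs) : VF :=
  mkVF (fun _ _ _ _ _ => 0) (fun _ _ _ _ _ => 1)
       (fun t r x y w => - (k2 K t r * x + k3 K t r * y))
       (fun t r x y w => - (k6 K t r * x + k5 K t r * y))
       (fun t r x y w => - (k9 K t r * w)).

Definition delta_w (K : coeffs) : VF :=
  mkVF (fun _ _ _ _ _ => 0) (fun _ _ _ _ _ => 0)
       (fun t r x y w => w * k7 K t r)
       (fun t r x y w => w * k10 K t r)
       (fun t r x y w => k8 K t r * x + k9 K t r * y).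

(* Both sides of the equivalence say the same thing pointwise in (t, r).
   The bracket [delta_t, delta_r] has no horizontal part and its vertical part is
   (a1 tdot + a2 rdot) d/dtdot + (a3 tdot + a4 rdot) d/drdot + a5 w d/dw.
   It is a multiple of delta_w = k10 (a w d/dtdot + w d/drdot + (b tdot + e rdot) d/dw),
   e = ab + c, iff a5 = 0, (a1, a2) = a (a3, a4) and the product of the linear forms
   a3 tdot + a4 rdot and b tdot + e rdot vanishes identically; as R[tdot, rdot] is a
   domain, the latter means (a3, a4) = 0 or b = e = 0, i.e. b = c = 0.  The equations
   A = ... = F = 0 are a triangular rewriting of the same conditions. *)

From Stdlib Require Import Reals Lra.
From Coquelicot Require Import Coquelicot.
Open Scope R_scope.

Lemma mul_linear_forms_eq0 (p q u v : R) :
  p * u = 0 -> q * v = 0 -> p * v + q * u = 0 ->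
  (p = 0 /\ q = 0) \/ (u = 0 /\ v = 0).
Proof.
  intros Hpu Hqv Hmix.
  destruct (Rmult_integral _ _ Hpu) as [-> | ->].
  - assert (Hqu : q * u = 0) by lra.
    destruct (Rmult_integral _ _ Hqu) as [-> | ->]; [left; lra |].
    destruct (Rmult_integral _ _ Hqv) as [-> | ->]; [left | right]; lra.
  - assert (Hpv : p * v = 0) by lra.
    destruct (Rmult_integral _ _ Hpv) as [-> | ->]; [| right; lra].
    destruct (Rmult_integral _ _ Hqv) as [-> | ->]; [left | right]; lra.
Qed.

Definition span_conditions (a b c a1 a2 a3 a4 a5 : R) : Prop :=
  a5 = 0 /\ a1 = a * a3 /\ a2 = a * a4 /\
  ((a3 = 0 /\ a4 = 0) \/ (b = 0 /\ c = 0)).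

Lemma ABCDEF_eq0_iff (a b c a1 a2 a3 a4 a5 : R) :
  (b * (a * a1 + a2) + (a * b + c) * (a * a3 + a4) - a5 * (2 * a * b + c) = 0 /\
   a * (a * a3 + a4) - (a * a1 + a2) = 0 /\
   (a * b + c) * a3 + b * (a * a3 + a4) + b * (a1 - 2 * a5) = 0 /\
   a * a3 - a1 + a5 = 0 /\ b * a3 = 0 /\ a * a3 - a1 = 0)
  <-> span_conditions a b c a1 a2 a3 a4 a5.
Proof.
  split.
  - intros (HA & HB & HC & HD & HE & HF).
    assert (Ha1 : a1 = a * a3) by lra.
    assert (Ha5 : a5 = 0) by lra.
    subst a1 a5.
    assert (Ha2 : a2 = a * a4) by lra.
    subst a2.
    (* now, with e = ab + c: e a4 = A - a C + a^2 E and e a3 + b a4 = C - 2 a E *)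
    pose proof (f_equal (Rmult a) HC) as HaC.
    pose proof (f_equal (Rmult a) HE) as HaE.
    pose proof (f_equal (Rmult (a ^ 2)) HE) as Ha2E.
    assert (He4 : (a * b + c) * a4 = 0) by lra.
    assert (Hmix : (a * b + c) * a3 + b * a4 = 0) by lra.
    do 3 (split; [reflexivity |]).
    destruct (mul_linear_forms_eq0 a3 a4 b (a * b + c)) as [Ha | Hb];
      [lra | lra | lra | left; exact Ha |].
    destruct Hb as [-> He]; right; split; lra.
  - intros (-> & -> & -> & [[-> ->] | [-> ->]]); repeat split; ring.
Qed.

Lemma span_conditions_sufficient (a b c a1 a2 a3 a4 a5 k x y w : R) :
  k <> 0 -> w <> 0 -> span_conditions a b c a1 a2 a3 a4 a5 ->
  a1 * x + a2 * y = (a3 * x + a4 * y) / (w * k) * (w * (a * k)) /\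
  a3 * x + a4 * y = (a3 * x + a4 * y) / (w * k) * (w * k) /\
  a5 * w = (a3 * x + a4 * y) / (w * k) * (b * k * x + (a * b + c) * k * y) /\
  ((a3 * x + a4 * y) / (w * k) = 0 \/ (b = 0 /\ c = 0)).
Proof.
  intros Hk Hw (-> & -> & -> & [[-> ->] | [-> ->]]).
  - repeat split; [field; auto | field; auto | | left]; field; auto.
  - repeat split; [field; auto | field; auto | ring | right; auto].
Qed.

Lemma span_conditions_necessary (a b c a1 a2 a3 a4 a5 k : R) :
  k <> 0 ->
  (forall x y, exists al,
     a1 * x + a2 * y = al * (a * k) /\ a3 * x + a4 * y = al * k /\
     a5 = al * (b * k * x + (a * b + c) * k * y)) ->
  span_conditions a b c a1 a2 a3 a4 a5.
Proof.
  intros Hk Hprop.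
  assert (Hlin : forall x y, a1 * x + a2 * y = a * (a3 * x + a4 * y)).
  { intros x y; destruct (Hprop x y) as (al & H1 & H2 & _).
    rewrite H1, H2; ring. }
  assert (Hquad : forall x y, a5 = (a3 * x + a4 * y) * (b * x + (a * b + c) * y)).
  { intros x y; destruct (Hprop x y) as (al & _ & H2 & H3).
    rewrite H3, H2; ring. }
  pose proof (Hlin 1 0) as H10; pose proof (Hlin 0 1) as H01.
  pose proof (Hquad 0 0) as Q00; pose proof (Hquad 1 0) as Q10.
  pose proof (Hquad 0 1) as Q01; pose proof (Hquad 1 1) as Q11.
  repeat split; [lra | lra | lra |].
  destruct (mul_linear_forms_eq0 a3 a4 b (a * b + c)) as [Ha | Hb];
    [lra | lra | lra | left; exact Ha |].
  destruct Hb as [-> He]; right; split; lra.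
Qed.

Lemma k7_k8_k9_normal_form (K : coeffs) (t r : R) :
  k10 K t r <> 0 ->
  k7 K t r = ca K t r * k10 K t r /\ k8 K t r = cb K t r * k10 K t r /\
  k9 K t r = (ca K t r * cb K t r + cc K t r) * k10 K t r.
Proof. intros H10; unfold ca, cb, cc; repeat split; field; exact H10. Qed.

Lemma Derive_opp_lin2 (f g : R -> R) (x y t : R) :
  ex_derive f t -> ex_derive g t ->
  Derive (fun s => - (f s * x + g s * y)) t = - (Derive f t * x + Derive g t * y).
Proof.
  intros Hf Hg; apply is_derive_unique; auto_derive; [tauto |].
  rewrite !Rmult_1_l; reflexivity.
Qed.

Lemma Derive_opp_scal_r (f : R -> R) (w t : R) :
  ex_derive f t -> Derive (fun s => - (f s * w)) t = - (Derive f t * w).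
Proof.
  intros Hf; apply is_derive_unique; auto_derive; [tauto |].
  rewrite Rmult_1_l; reflexivity.
Qed.

Lemma Derive_opp_affine_l (a b y x : R) : Derive (fun s => - (a * s + b * y)) x = - a.
Proof. apply is_derive_unique; auto_derive; [auto | ring]. Qed.

Lemma Derive_opp_affine_r (a b y x : R) : Derive (fun s => - (a * y + b * s)) x = - b.
Proof. apply is_derive_unique; auto_derive; [auto | ring]. Qed.

Lemma Derive_opp_scal_l (a w : R) : Derive (fun s => - (a * s)) w = - a.
Proof. apply is_derive_unique; auto_derive; [auto | ring]. Qed.

Lemma smooth_on_ex_derive (U : R * R -> Prop) (f : R -> R -> R) (t r : R) :
  smooth_on U f -> U (t, r) -> ex_derive (fun s => f s r) t /\ ex_derive (f t) r.
Proof. intros Hf HU; apply (proj1 (Hf 1%nat) t r HU). Qed.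

Lemma bracket_delta_t_delta_r (U : R * R -> Prop) (K : coeffs) (t r x y w : R) :
  coeffs_smooth U K -> U (t, r) ->
  vt (bracket (delta_t K) (delta_r K)) t r x y w = 0 /\
  vr (bracket (delta_t K) (delta_r K)) t r x y w = 0 /\
  vtd (bracket (delta_t K) (delta_r K)) t r x y w = a1 K t r * x + a2 K t r * y /\
  vrd (bracket (delta_t K) (delta_r K)) t r x y w = a3 K t r * x + a4 K t r * y /\
  vw (bracket (delta_t K) (delta_r K)) t r x y w = a5 K t r * w.
Proof.
  unfold coeffs_smooth; intros HS HU.
  repeat match goal with
  | HS : _ /\ _ |- _ => destruct HS
  | Hf : smooth_on U _ |- _ => destruct (smooth_on_ex_derive _ _ _ _ Hf HU); clear Hf
  end.
  unfold bracket, vf_apply, delta_t, delta_r, pd_t, pd_r, pd_td, pd_rd, pd_w; simpl.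
  rewrite !Derive_const, !Derive_opp_lin2, !Derive_opp_scal_r, !Derive_opp_affine_l,
    !Derive_opp_affine_r, !Derive_opp_scal_l by auto.
  assert (Hd_r : forall f : R -> R -> R, d_r f t r = Derive (f t) r) by reflexivity.
  unfold a1, a2, a3, a4, a5, d_t; rewrite !Hd_r.
  repeat split; ring.
Qed.

Theorem lemma3 (U : R * R -> Prop) (K : coeffs) :
  open U ->
  coeffs_smooth U K ->
  (forall t r, U (t, r) -> k10 K t r <> 0) ->
  ((forall t r, U (t, r) ->
      cA K t r = 0 /\ cB K t r = 0 /\ cC K t r = 0 /\
      cD K t r = 0 /\ cE K t r = 0 /\ cF K t r = 0)
   <->
   (exists alpha : SF,
      VF_eq_on (fun t r x y w => U (t, r) /\ 0 < w)
               (bracket (delta_t K) (delta_r K)) (scale alpha (delta_w K))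
      /\ (forall t r x y w, U (t, r) -> 0 < w ->
            alpha t r x y w = 0 \/ (cb K t r = 0 /\ cc K t r = 0)))).
Proof.
  intros _ HS H10; split.
  - intros HABCDEF.
    assert (Hspan : forall t r, U (t, r) ->
      span_conditions (ca K t r) (cb K t r) (cc K t r)
        (a1 K t r) (a2 K t r) (a3 K t r) (a4 K t r) (a5 K t r))
      by (intros t r HU; apply ABCDEF_eq0_iff, HABCDEF, HU).
    exists (fun t r x y w => (a3 K t r * x + a4 K t r * y) / (w * k10 K t r)); split.
    + intros t r x y w [HU Hw].
      destruct (span_conditions_sufficient _ _ _ _ _ _ _ _ _ x y w
                  (H10 t r HU) (Rgt_not_eq _ _ Hw) (Hspan t r HU)) as (G1 & G2 & G3 & _).
      destruct (bracket_delta_t_delta_r U K t r x y w HS HU) as (-> & -> & -> & -> & ->).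
      cbn [vt vr vtd vrd vw scale delta_w].
      destruct (k7_k8_k9_normal_form K t r (H10 t r HU)) as (-> & -> & ->).
      repeat split; [ring | ring | exact G1 | exact G2 | exact G3].
    + intros t r x y w HU Hw.
      apply (span_conditions_sufficient _ _ _ _ _ _ _ _ _ x y w
               (H10 t r HU) (Rgt_not_eq _ _ Hw) (Hspan t r HU)).
  - intros (al & Hal & _) t r HU.
    apply ABCDEF_eq0_iff, (span_conditions_necessary _ _ _ _ _ _ _ _ _ (H10 t r HU)).
    intros x y; exists (al t r x y 1).
    destruct (Hal t r x y 1 (conj HU Rlt_0_1)) as (_ & _ & G1 & G2 & G3).
    destruct (bracket_delta_t_delta_r U K t r x y 1 HS HU) as (_ & _ & E1 & E2 & E3).
    destruct (k7_k8_k9_normal_form K t r (H10 t r HU)) as (E7 & E8 & E9).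
    cbn [vt vr vtd vrd vw scale delta_w] in G1, G2, G3.
    rewrite E1, E7, Rmult_1_l in G1; rewrite E2, Rmult_1_l in G2.
    rewrite E3, E8, E9, Rmult_1_r in G3.
    auto.
Qed.
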